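(* The operator $(H_3f)(t)=\int_0^1\left(1+\frac12\sqrt[7]{4\left(t-\frac12\right)\left(u-\frac12\right)}\right)f^3(u)\,du$ on $C[0,1]$ has at least two distinct strictly positive fixed points.
   Context: For real $s$, $\sqrt[7]{s}$ denotes the real seventh root (negative for $s<0$). *)

From Stdlib Require Import Reals.
Open Scope R_scope.

Definition root7 (s : R) : R :=
  match Rlt_dec 0 s with
  | left _ => Rpower s (1/7)
  | right _ =>
      match Rlt_dec s 0 with
      | left _ => - Rpower (- s) (1/7)
      | right _ => 0
      end
  end.

Definition K3 (t u : R) : R := 1 + (1/2) * root7 (4 * (t - 1/2) * (u - 1/2)).

Definition H3_integrand (f : R -> R) (t : R) : R -> R :=
  fun u => K3 t u * (f u) ^ 3.

Definition is_H3_fixed_point (f : R -> R) : Prop :=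
  forall t, 0 <= t <= 1 ->
    exists pr : Riemann_integrable (H3_integrand f t) 0 1,
      f t = RiemannInt pr.

From Coquelicot Require Import Coquelicot.
From Stdlib Require Import Reals Ranalysis5 Lra Psatz.
Open Scope R_scope.

(* Write phi t = root7 (2t - 1).  Since
   4 (t - 1/2) (u - 1/2) = (2t - 1)(2u - 1) and the real seventh root is
   multiplicative, the kernel is K3 t u = 1 + phi t * phi u / 2.  Hence H_3
   maps the two-parameter family of "profiles" a + b * phi into itself, and
   the substitution u = (1 + s^7) / 2 (under which phi u = s and
   du = 7/2 s^6 ds) turns the integral into a polynomial integral over
   [-1, 1].  The result is
       H_3 (a + b phi) = (a^3 + 7/3 a b^2) + (7/6 a^2 b + 7/22 b^3) phi,
   so fixed points of H_3 among profiles are the solutions of two polynomial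
   equations in (a, b).  The solutions (1, 0) and
   (sqrt (399/476), sqrt (33/476)) give two distinct positive fixed points. *)

Lemma pow_lt_compat_nonneg n u v : 0 <= u < v -> u ^ S n < v ^ S n.
Proof.
  intros Huv. induction n as [| n IH]; [simpl; lra |].
  change (u * u ^ S n < v * v ^ S n).
  assert (0 <= u ^ S n) by (apply pow_le; lra).
  nra.
Qed.

Lemma pow7_lt x y : x < y -> x ^ 7 < y ^ 7.
Proof.
  intros Hxy.
  assert (Hpos : forall u v, 0 <= u < v -> u ^ 7 < v ^ 7)
    by (intros u v; apply (pow_lt_compat_nonneg 6)).
  destruct (Rle_dec 0 x) as [Hx | Hx]; [apply Hpos; lra |].
  destruct (Rle_dec y 0) as [Hy | Hy].
  - assert (Hneg := Hpos (- y) (- x) ltac:(lra)).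
    replace ((- y) ^ 7) with (- y ^ 7) in Hneg by ring.
    replace ((- x) ^ 7) with (- x ^ 7) in Hneg by ring. lra.
  - assert (Hy7 : 0 < y ^ 7) by (apply pow_lt; lra).
    assert (Hx7 := pow_lt (- x) 7 ltac:(lra)).
    replace ((- x) ^ 7) with (- x ^ 7) in Hx7 by ring. lra.
Qed.

Lemma pow7_inj x y : x ^ 7 = y ^ 7 -> x = y.
Proof.
  intros H. destruct (Rtotal_order x y) as [Hlt | [Heq | Hgt]]; auto.
  - apply pow7_lt in Hlt; lra.
  - apply pow7_lt in Hgt; lra.
Qed.

Lemma root7_pow s : root7 s ^ 7 = s.
Proof.
  assert (Hpos : forall s, 0 < s -> Rpower s (1 / 7) ^ 7 = s).
  { intros r Hr. rewrite <- Rpower_pow by apply exp_pos.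
    rewrite Rpower_mult. replace (1 / 7 * INR 7) with 1 by (simpl; field).
    apply Rpower_1, Hr. }
  unfold root7. destruct (Rlt_dec 0 s); [apply Hpos; lra |].
  destruct (Rlt_dec s 0).
  - replace ((- Rpower (- s) (1 / 7)) ^ 7) with (- Rpower (- s) (1 / 7) ^ 7)
      by ring.
    rewrite Hpos; lra.
  - simpl; lra.
Qed.

Lemma root7_of_pow w : root7 (w ^ 7) = w.
Proof. apply pow7_inj, root7_pow. Qed.

Lemma root7_le x y : x <= y -> root7 x <= root7 y.
Proof.
  intros Hxy. destruct (Rle_lt_dec (root7 x) (root7 y)) as [Hle | Hgt]; auto.
  apply pow7_lt in Hgt. rewrite !root7_pow in Hgt. lra.
Qed.

(* root7 is multiplicative; this is what makes the kernel K3 separable. *)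
Lemma root7_mult x y : root7 (x * y) = root7 x * root7 y.
Proof. apply pow7_inj. rewrite Rpow_mult_distr, !root7_pow. reflexivity. Qed.

(* Continuity, as the inverse of the continuous increasing map s |-> s^7
   restricted to [root7 b - 1, root7 b + 1]. *)
Lemma root7_continuous : continuity root7.
Proof.
  intros b. set (w := root7 b).
  apply (continuity_pt_recip_interv (fun s => s ^ 7) root7 (w - 1) (w + 1)).
  - lra.
  - intros x y _ Hxy _. apply pow7_lt, Hxy.
  - intros x _ _. apply root7_pow.
  - intros x Hlo Hhi. apply root7_le in Hlo, Hhi.
    rewrite !root7_of_pow in Hlo, Hhi. lra.
  - intros x _. apply derivable_continuous_pt, derivable_pt_pow.
  - rewrite <- (root7_pow b). fold w. split; apply pow7_lt; lra.
Qed.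

Lemma ex_derive_continuity (f : R -> R) :
  (forall x, ex_derive f x) -> continuity f.
Proof.
  intros Hf x. apply continuity_pt_filterlim.
  apply (ex_derive_continuous (V := R_NormedModule)), Hf.
Qed.

Definition phi (t : R) : R := root7 (2 * t - 1).

Lemma phi_continuous : continuity phi.
Proof.
  apply (continuity_comp (fun t => 2 * t - 1) root7).
  - apply ex_derive_continuity. intros x. auto_derive. exact I.
  - apply root7_continuous.
Qed.

Lemma phi_bounds t : 0 <= t <= 1 -> -1 <= phi t <= 1.
Proof.
  intros Ht. unfold phi.
  assert (Hlo := root7_of_pow (-1)). assert (Hhi := root7_of_pow 1).
  replace ((-1) ^ 7) with (-1) in Hlo by ring. rewrite pow1 in Hhi.
  split; [rewrite <- Hlo | rewrite <- Hhi]; apply root7_le; lra.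
Qed.

Lemma phi_0 : phi 0 = -1.
Proof.
  unfold phi. replace (2 * 0 - 1) with ((-1) ^ 7) by (simpl; lra).
  apply root7_of_pow.
Qed.

Lemma phi_subst s : phi ((1 + s ^ 7) / 2) = s.
Proof.
  unfold phi. replace (2 * ((1 + s ^ 7) / 2) - 1) with (s ^ 7) by field.
  apply root7_of_pow.
Qed.

Lemma K3_phi t u : K3 t u = 1 + phi t * phi u / 2.
Proof.
  unfold K3, phi. rewrite <- root7_mult.
  replace (4 * (t - 1 / 2) * (u - 1 / 2)) with ((2 * t - 1) * (2 * u - 1))
    by field.
  field.
Qed.

Lemma RInt_phi_subst (G : R -> R) :
  continuity G ->
  is_RInt (fun s => 7 / 2 * s ^ 6 * G s) (-1) 1 (RInt (fun u => G (phi u)) 0 1).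
Proof.
  intros HG.
  assert (HGphi : continuity (fun u => G (phi u)))
    by apply (continuity_comp phi G phi_continuous HG).
  assert (Hchange : forall x, is_derive (fun s => (1 + s ^ 7) / 2) x (7 / 2 * x ^ 6))
    by (intros x; auto_derive; [exact I | field]).
  assert (Hjacobian : forall x, continuous (fun s => 7 / 2 * s ^ 6) x)
    by (intros x; apply (ex_derive_continuous (V := R_NormedModule));
        auto_derive; exact I).
  assert (Hsubst := is_RInt_comp (fun u => G (phi u))
    (fun s => (1 + s ^ 7) / 2) (fun s => 7 / 2 * s ^ 6) (-1) 1
    (fun x _ => proj1 (continuity_pt_filterlim _ _) (HGphi _))
    (fun x _ => conj (Hchange x) (Hjacobian x))).
  cbv beta in Hsubst.
  replace ((1 + (-1) ^ 7) / 2) with 0 in Hsubst by (simpl; field).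
  replace ((1 + 1 ^ 7) / 2) with 1 in Hsubst by (simpl; field).
  revert Hsubst. apply is_RInt_ext. intros s _.
  rewrite phi_subst. reflexivity.
Qed.

(* The integral produced by H_3 on the profile a + b phi, where c = phi t:
   only the even powers of s survive on the symmetric interval. *)
Lemma is_RInt_profile_polynomial a b c :
  is_RInt (fun s => 7 / 2 * s ^ 6 * ((1 + c * s / 2) * (a + b * s) ^ 3)) (-1) 1
    ((a ^ 3 + 7 / 3 * a * b ^ 2) + (7 / 6 * a ^ 2 * b + 7 / 22 * b ^ 3) * c).
Proof.
  set (antiderivative := fun s =>
    a ^ 3 * s ^ 7 / 2 + 21 / 16 * a ^ 2 * b * s ^ 8 + 7 / 6 * a * b ^ 2 * s ^ 9
    + 7 / 20 * b ^ 3 * s ^ 10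
    + 7 / 4 * c * (a ^ 3 * s ^ 8 / 8 + a ^ 2 * b * s ^ 9 / 3
                   + 3 / 10 * a * b ^ 2 * s ^ 10 + b ^ 3 * s ^ 11 / 11)).
  replace ((a ^ 3 + 7 / 3 * a * b ^ 2) + (7 / 6 * a ^ 2 * b + 7 / 22 * b ^ 3) * c)
    with (minus (antiderivative 1) (antiderivative (-1)))
    by (unfold minus, plus, opp, antiderivative; simpl; field).
  apply (is_RInt_derive (V := R_CompleteNormedModule)).
  - intros s _. unfold antiderivative. auto_derive; [exact I | field].
  - intros s _. apply (ex_derive_continuous
      (fun s => 7 / 2 * s ^ 6 * ((1 + c * s / 2) * (a + b * s) ^ 3))).
    auto_derive. exact I.
Qed.

Definition profile (a b : R) (t : R) : R := a + b * phi t.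

Lemma profile_continuous a b : continuity (profile a b).
Proof.
  apply (continuity_comp phi (fun s => a + b * s) phi_continuous).
  apply ex_derive_continuity. intros x. auto_derive. exact I.
Qed.

Lemma H3_profile a b t :
  exists pr : Riemann_integrable (H3_integrand (profile a b) t) 0 1,
    RiemannInt pr =
      profile (a ^ 3 + 7 / 3 * a * b ^ 2) (7 / 6 * a ^ 2 * b + 7 / 22 * b ^ 3) t.
Proof.
  set (G := fun s => (1 + phi t * s / 2) * (a + b * s) ^ 3).
  assert (HG : continuity G)
    by (apply ex_derive_continuity; intros x; unfold G; auto_derive; exact I).
  assert (Hintegrand : forall u, G (phi u) = H3_integrand (profile a b) t u).
  { intros u. unfold H3_integrand, G, profile. rewrite K3_phi. reflexivity. }
  assert (Hcont : continuity (H3_integrand (profile a b) t)).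
  { intros u. apply (continuity_pt_ext _ _ u Hintegrand).
    apply (continuity_comp phi G phi_continuous HG). }
  exists (continuity_implies_RiemannInt Rle_0_1 (fun u _ => Hcont u)).
  rewrite <- RInt_Reals, <- (RInt_ext _ _ 0 1 (fun u _ => Hintegrand u)).
  transitivity (RInt (fun s => 7 / 2 * s ^ 6 * G s) (-1) 1).
  - symmetry. apply is_RInt_unique, RInt_phi_subst, HG.
  - apply is_RInt_unique, (is_RInt_profile_polynomial a b (phi t)).
Qed.

Lemma profile_fixed_point a b :
  a ^ 3 + 7 / 3 * a * b ^ 2 = a ->
  7 / 6 * a ^ 2 * b + 7 / 22 * b ^ 3 = b ->
  is_H3_fixed_point (profile a b).
Proof.
  intros Ha Hb t _. destruct (H3_profile a b t) as [pr Hpr].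
  exists pr. rewrite Hpr, Ha, Hb. reflexivity.
Qed.

Lemma profile_pos a b t : 0 <= b < a -> 0 <= t <= 1 -> 0 < profile a b t.
Proof.
  intros Hab Ht. pose proof (phi_bounds t Ht). unfold profile. nra.
Qed.

Theorem proposition4p1 :
  exists f1 f2 : R -> R,
    (forall x, 0 <= x <= 1 -> continuity_pt f1 x) /\
    (forall x, 0 <= x <= 1 -> continuity_pt f2 x) /\
    (forall x, 0 <= x <= 1 -> 0 < f1 x) /\
    (forall x, 0 <= x <= 1 -> 0 < f2 x) /\
    is_H3_fixed_point f1 /\ is_H3_fixed_point f2 /\
    (exists x, 0 <= x <= 1 /\ f1 x <> f2 x).
Proof.
  set (a := sqrt (399 / 476)). set (b := sqrt (33 / 476)).
  assert (Ha2 : a ^ 2 = 399 / 476) by (apply pow2_sqrt; lra).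
  assert (Hb2 : b ^ 2 = 33 / 476) by (apply pow2_sqrt; lra).
  assert (Hb : 0 < b) by (apply sqrt_lt_R0; lra).
  assert (Hab : b < a) by (apply sqrt_lt_1; lra).
  (* Both (1, 0) and (a, b) solve a^2 + 7/3 b^2 = 1, 7/6 a^2 + 7/22 b^2 = 1. *)
  exists (profile 1 0), (profile a b).
  split; [intros x _; apply profile_continuous |].
  split; [intros x _; apply profile_continuous |].
  split; [intros x Hx; apply profile_pos; lra |].
  split; [intros x Hx; apply profile_pos; lra |].
  split; [apply profile_fixed_point; lra |].
  split; [apply profile_fixed_point; nra |].
  exists 0. split; [lra |].
  unfold profile. rewrite phi_0. nra.
Qed.
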